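(* Consider the deterministic dividend problem below with constants $k>0$, $\bar\mu>0$, $r>0$. For $\mu<0$ let $\tau_0(\mu)=\frac1k\ln\!\big(\frac{\bar\mu-\mu}{\bar\mu}\big)$ and $x_b(\mu)=-\bar\mu\,\tau_0(\mu)-\frac{\mu}{k}$; for $\mu\ge0$ let $\tau_0(\mu)=0$ and $x_b(\mu)=0$. Then: (a) for $\mu\ge0$ and $x\ge0$, $V(x,\mu)=x+\frac{\bar\mu}{r}+\frac{\mu-\bar\mu}{r+k}$, attained by paying $x$ at time $0$ and thereafter paying out earnings as they arrive ($L_t=x+\int_0^t\mu_s\,ds$); (b) for $\mu<0$: $V(x,\mu)=x$ if $x<x_b(\mu)$, and $V(x,\mu)=x+\max\{0,\;e^{-r\tau_0(\mu)}V(0,0)-x_b(\mu)\}$ if $x\ge x_b(\mu)$; (c) there exists $\mu^*<0$ such that $V(x,\mu)=x$ for all $x\ge0$ whenever $\mu\le\mu^*$ (immediate liquidation is optimal), while for $\mu\ge\mu^*$ and $x\ge x_b(\mu)$ it is optimal to pay $x-x_b(\mu)$ immediately and thereafter all earnings as they arrive, i.e. $L_t=x-x_b(\mu)+\int_{\tau_0(\mu)\wedge t}^t\mu_s\,ds$.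
   Context: Deterministic setting: the profitability is $\mu_t=\bar\mu+(\mu-\bar\mu)e^{-kt}$ (the solution of $d\mu_t=k(\bar\mu-\mu_t)dt$, $\mu_0=\mu\in\mathbb R$), and the cash reserves are $X_t=x+\int_0^t\mu_s\,ds-L_t$ for $x\ge0$, where an admissible dividend process $L$ is a deterministic càdlàg nondecreasing function with $L_{0-}=0$ and $\Delta L_t\le X_{t-}$. The bankruptcy time is $\theta(L)=\inf\{t>0:X_t<0\}$, and $V(x,\mu)=\sup_L\int_0^{\theta(L)}e^{-rt}\,dL_t$ (including a possible jump at time $0$). *)

From Stdlib Require Import Reals Lra List.
Open Scope R_scope.

Definition prof (k mubar mu t : R) : R := mubar + (mu - mubar) * exp (- k * t).

(* Cumulative earnings  I(t) = \int_0^t mu_s ds, written in closed form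
   (valid for k <> 0; see lemma cum_earn_deriv below). *)
Definition cum_earn (k mubar mu t : R) : R :=
  mubar * t + (mu - mubar) * (1 - exp (- k * t)) / k.

Lemma cum_earn_0 k mubar mu : cum_earn k mubar mu 0 = 0.
Proof. unfold cum_earn. replace (- k * 0) with 0 by ring. rewrite exp_0.
  unfold Rdiv. ring. Qed.

Lemma cum_earn_deriv k mubar mu t : k <> 0 ->
  derivable_pt_lim (cum_earn k mubar mu) t (prof k mubar mu t).
Proof.
  intros Hk.
  assert (H1 : derivable_pt_lim (fun t => - k * t) t (- k)).
  { pose proof (derivable_pt_lim_scal id (- k) t 1 (derivable_pt_lim_id t)) as H.
    unfold mult_real_fct, id in H. rewrite Rmult_1_r in H. exact H. }
  assert (Hg : derivable_pt_lim (fun t => exp (- k * t)) t (exp (- k * t) * (- k))).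
  { apply (derivable_pt_lim_comp (fun t => - k * t) exp t (- k) (exp (- k * t)) H1).
    apply derivable_pt_lim_exp. }
  assert (H2 : derivable_pt_lim (fun t => mubar * t) t mubar).
  { pose proof (derivable_pt_lim_scal id mubar t 1 (derivable_pt_lim_id t)) as H.
    unfold mult_real_fct, id in H. rewrite Rmult_1_r in H. exact H. }
  assert (H3 : derivable_pt_lim (fun t => (mu - mubar) * (1 - exp (- k * t)) / k) t
                 ((mu - mubar) * (0 - exp (- k * t) * (- k)) / k)).
  { pose proof (derivable_pt_lim_minus (fun _ => 1) (fun t => exp (- k * t)) t 0 _
                  (derivable_pt_lim_const 1 t) Hg) as H.
    pose proof (derivable_pt_lim_scal _ ((mu - mubar) / k) t _ H) as H'.
    unfold mult_real_fct, minus_fct in H'.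
    intros eps Heps. destruct (H' eps Heps) as [d Hd]. exists d. intros h Hh0 Hh.
    specialize (Hd h Hh0 Hh). unfold Rdiv in *.
    replace ((mu - mubar) * (1 - exp (- k * (t + h))) * / k - (mu - mubar) * (1 - exp (- k * t)) * / k)
      with ((mu - mubar) * / k * (1 - exp (- k * (t + h))) - (mu - mubar) * / k * (1 - exp (- k * t))) by ring.
    replace ((mu - mubar) * (0 - exp (- k * t) * - k) * / k)
      with ((mu - mubar) * / k * (0 - exp (- k * t) * - k)) by ring.
    exact Hd. }
  unfold cum_earn, prof.
  replace (mubar + (mu - mubar) * exp (- k * t)) with
    (mubar + (mu - mubar) * (0 - exp (- k * t) * (- k)) / k) by (field; auto).
  apply (derivable_pt_lim_plus (fun t => mubar * t) (fun t => (mu - mubar) * (1 - exp (- k * t)) / k)); assumption.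
Qed.

Definition reserves (k mubar x mu : R) (L : R -> R) (t : R) : R :=
  x + cum_earn k mubar mu t - L t.

Definition left_lim (f : R -> R) (t l : R) : Prop :=
  forall eps, 0 < eps -> exists delta, 0 < delta /\
    forall s, t - delta < s < t -> Rabs (f s - l) < eps.

(* t <= theta(L), where theta(L) = inf {t > 0 : X_t < 0} (possibly +infinity). *)
Definition not_after_ruin (k mubar x mu : R) (L : R -> R) (t : R) : Prop :=
  0 <= t /\ forall s, 0 < s < t -> 0 <= reserves k mubar x mu L s.

(* Admissible dividend strategies: deterministic, cadlag, nondecreasing,
   L_{0-} = 0, and Delta L_t <= X_{t-} (up to bankruptcy). *)
Definition admissible (k mubar x mu : R) (L : R -> R) : Prop :=
  (forall s t, 0 <= s <= t -> L s <= L t) /\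
  (forall t, 0 <= t -> forall eps, 0 < eps -> exists delta, 0 < delta /\
      forall s, t <= s < t + delta -> Rabs (L s - L t) < eps) /\
  0 <= L 0 /\                       (* Delta L_0 = L_0 - L_{0-} >= 0 *)
  L 0 <= x /\                       (* Delta L_0 <= X_{0-} = x *)
  (forall t, 0 < t -> not_after_ruin k mubar x mu L t ->
     forall lL lX, left_lim L t lL ->
       left_lim (reserves k mubar x mu L) t lX -> L t - lL <= lX).

Fixpoint incr_from (prev : R) (ts : list R) : Prop :=
  match ts with
  | nil => True
  | t :: ts' => prev < t /\ incr_from t ts'
  end.

(* Lower Stieltjes sum  sum_i e^{-r t_i} (L t_i - L t_{i-1}); since e^{-rt}
   is decreasing, e^{-r t_i} is its infimum on (t_{i-1}, t_i]. *)
Fixpoint stieltjes_sum (r : R) (L : R -> R) (prev : R) (ts : list R) : R :=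
  match ts with
  | nil => 0
  | t :: ts' => exp (- r * t) * (L t - L prev) + stieltjes_sum r L t ts'
  end.

(* s is a lower sum for \int_{[0,theta(L)]} e^{-rt} dL_t  (jump at 0 included,
   with weight e^0 = 1). *)
Definition dividend_lower_sum (k mubar r x mu : R) (L : R -> R) (s : R) : Prop :=
  exists ts, incr_from 0 ts /\ Forall (not_after_ruin k mubar x mu L) ts /\
    s = L 0 + stieltjes_sum r L 0 ts.

(* J is the value \int_0^{theta(L)} e^{-rt} dL_t of strategy L
   (Stieltjes integral = supremum of the lower sums). *)
Definition payoff_is (k mubar r x mu : R) (L : R -> R) (J : R) : Prop :=
  is_lub (dividend_lower_sum k mubar r x mu L) J.

Definition value_is (k mubar r x mu v : R) : Prop :=
  is_lub (fun s => exists L, admissible k mubar x mu L /\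
                             dividend_lower_sum k mubar r x mu L s) v.

Definition tau0 (k mubar mu : R) : R :=
  if Rlt_dec mu 0 then / k * ln ((mubar - mu) / mubar) else 0.

Definition xb (k mubar mu : R) : R :=
  if Rlt_dec mu 0 then - mubar * tau0 k mubar mu - mu / k else 0.

From Stdlib Require Import Reals Lra List Classical.
From Coquelicot Require Import Coquelicot.
Open Scope R_scope.

(* An admissible strategy can never have paid more than the cash x + I(t)
   generated so far, and I decreases up to tau0 and increases afterwards.
   Hence either all points of a lower sum lie before tau0, where L_t <= x, or
   the strategy survives until tau0; then, by summation by parts against the
   discounted tail of the earnings, it is dominated by L*: pay x - xb at once
   and then the earnings as they arrive.  L* is admissible as soon as
   x >= xb, and its lower sums on fine grids approach x + e^{-r tau0} V(0,0) - xb.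
   The threshold mu* is where this gain over liquidation changes sign; as a
   function of tau0 the gain is decreasing, positive at 0 and eventually
   negative. *)

Lemma exp_le_mono a b : a <= b -> exp a <= exp b.
Proof. intros [H | ->]; [apply Rlt_le, exp_increasing, H | apply Rle_refl]. Qed.

Lemma le_of_derivative_nonneg (f f' : R -> R) a b : a <= b ->
  (forall c, a <= c <= b -> derivable_pt_lim f c (f' c)) ->
  (forall c, a < c < b -> 0 <= f' c) -> f a <= f b.
Proof.
  intros [Hab | <-] Hd Hpos; [|apply Rle_refl].
  destruct (MVT_cor2 f f' a b Hab Hd) as [c [Hfab Hc]].
  specialize (Hpos c Hc). nra.
Qed.

Lemma is_lub_intro (E : R -> Prop) v :
  (forall s, E s -> s <= v) ->
  (forall eps, 0 < eps -> exists s, E s /\ v - eps < s) -> is_lub E v.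
Proof.
  intros Hub Happ. split; [exact Hub|]. intros b Hb. apply Rnot_lt_le. intros Hbv.
  destruct (Happ (v - b)) as [s [Hs Hvs]]; [lra|]. specialize (Hb s Hs). lra.
Qed.

Lemma continuity_pt_Rmax_l c t : continuity_pt (fun s => Rmax s c) t.
Proof.
  intros eps He. exists eps. split; [exact He|].
  intros y [_ Hy]. simpl in *. unfold R_dist in *.
  eapply Rle_lt_trans; [|exact Hy].
  unfold Rmax. repeat destruct Rle_dec; unfold Rabs; repeat destruct Rcase_abs; lra.
Qed.

Lemma left_lim_continuity_pt f t : continuity_pt f t -> left_lim f t (f t).
Proof.
  intros Hc eps He. destruct (Hc eps He) as [d [Hd Hfd]]. exists d. split; [exact Hd|].
  intros s Hs. apply (Hfd s). split.
  - split; [exact I | lra].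
  - simpl. unfold R_dist. rewrite Rabs_left; lra.
Qed.

Lemma left_lim_minus f g t a b :
  left_lim f t a -> left_lim g t b -> left_lim (fun s => f s - g s) t (a - b).
Proof.
  intros Hf Hg eps He.
  destruct (Hf (eps / 2)) as [d1 [Hd1 Hf1]]; [lra|].
  destruct (Hg (eps / 2)) as [d2 [Hd2 Hg2]]; [lra|].
  exists (Rmin d1 d2). split; [apply Rmin_pos; lra|]. intros s Hs.
  pose proof (Rmin_l d1 d2). pose proof (Rmin_r d1 d2).
  specialize (Hf1 s ltac:(lra)). specialize (Hg2 s ltac:(lra)).
  apply Rabs_def2 in Hf1. apply Rabs_def2 in Hg2. apply Rabs_def1; lra.
Qed.

Lemma left_lim_le f g t a b d : 0 < d ->
  (forall s, t - d < s < t -> f s <= g s) ->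
  left_lim f t a -> left_lim g t b -> a <= b.
Proof.
  intros Hd Hfg Hf Hg. apply Rnot_lt_le. intros Hba.
  destruct (Hf ((a - b) / 2)) as [d1 [Hd1 Hf1]]; [lra|].
  destruct (Hg ((a - b) / 2)) as [d2 [Hd2 Hg2]]; [lra|].
  set (s := t - Rmin d (Rmin d1 d2) / 2).
  assert (0 < Rmin d (Rmin d1 d2)) by (repeat apply Rmin_pos; lra).
  pose proof (Rmin_l d (Rmin d1 d2)). pose proof (Rmin_r d (Rmin d1 d2)).
  pose proof (Rmin_l d1 d2). pose proof (Rmin_r d1 d2).
  specialize (Hfg s ltac:(unfold s; lra)).
  specialize (Hf1 s ltac:(unfold s; lra)). specialize (Hg2 s ltac:(unfold s; lra)).
  apply Rabs_def2 in Hf1. apply Rabs_def2 in Hg2. lra.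
Qed.

Lemma nondecreasing_left_lim (L : R -> R) t : 0 < t ->
  (forall s u, 0 <= s <= u -> L s <= L u) -> exists l, left_lim L t l.
Proof.
  intros Ht Hmon.
  set (E := fun y => exists s, 0 <= s < t /\ y = L s).
  assert (HE : bound E) by (exists (L t); intros y [s [Hs ->]]; apply Hmon; lra).
  assert (HE0 : exists y, E y) by (exists (L 0), 0; split; [lra | reflexivity]).
  destruct (completeness E HE HE0) as [l [Hub Hlub]].
  exists l. intros eps He.
  assert (Hs0 : exists s, 0 <= s < t /\ l - eps < L s).
  { apply NNPP. intros Hno. enough (l <= l - eps) by lra.
    apply Hlub. intros y [s [Hs ->]]. apply Rnot_lt_le. intros Hlt. apply Hno. exists s; auto. }
  destruct Hs0 as [s0 [Hs0 Hls0]].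
  exists (t - s0). split; [lra|]. intros s Hs.
  assert (L s0 <= L s) by (apply Hmon; lra).
  assert (L s <= l) by (apply Hub; exists s; split; [lra | reflexivity]).
  apply Rabs_def1; lra.
Qed.

Section Earnings.

Variables k mb mu : R.
Hypotheses (Hk : 0 < k) (Hmb : 0 < mb).

Local Notation earn := (cum_earn k mb mu).
Local Notation t0 := (tau0 k mb mu).

Lemma tau0_of_neg : mu < 0 -> t0 = / k * ln ((mb - mu) / mb).
Proof. intros Hmu. unfold tau0. destruct (Rlt_dec mu 0); [reflexivity | lra]. Qed.

Lemma tau0_of_nonneg : 0 <= mu -> t0 = 0.
Proof. intros Hmu. unfold tau0. destruct (Rlt_dec mu 0); [lra | reflexivity]. Qed.

Lemma xb_of_neg : mu < 0 -> xb k mb mu = - mb * t0 - mu / k.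
Proof. intros Hmu. unfold xb. destruct (Rlt_dec mu 0); [reflexivity | lra]. Qed.

Lemma xb_of_nonneg : 0 <= mu -> xb k mb mu = 0.
Proof. intros Hmu. unfold xb. destruct (Rlt_dec mu 0); [lra | reflexivity]. Qed.

Lemma exp_k_tau0 : mu < 0 -> exp (- k * t0) = mb / (mb - mu).
Proof.
  intros Hmu. rewrite tau0_of_neg by exact Hmu.
  replace (- k * (/ k * ln ((mb - mu) / mb))) with (- ln ((mb - mu) / mb)) by (field; lra).
  rewrite exp_Ropp, exp_ln by (apply Rdiv_lt_0_compat; lra). field. lra.
Qed.

Lemma tau0_ge0 : 0 <= t0.
Proof.
  destruct (Rlt_dec mu 0) as [Hmu | Hmu]; [|rewrite tau0_of_nonneg; lra].
  apply Rnot_lt_le. intros Ht0.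
  assert (H1 : exp 0 < exp (- k * t0)) by (apply exp_increasing; nra).
  rewrite exp_0, exp_k_tau0 in H1 by exact Hmu.
  apply (Rmult_lt_compat_r (mb - mu)) in H1; [|lra].
  replace (mb / (mb - mu) * (mb - mu)) with mb in H1 by (field; lra). lra.
Qed.

Lemma prof_ge0 t : t0 <= t -> 0 <= prof k mb mu t.
Proof.
  intros Ht. unfold prof.
  assert (He : exp (- k * t) <= exp (- k * t0)) by (apply exp_le_mono; nra).
  pose proof (exp_pos (- k * t)).
  destruct (Rlt_dec mu 0) as [Hmu | Hmu].
  - rewrite exp_k_tau0 in He by exact Hmu.
    apply (Rmult_le_compat_l (mb - mu)) in He; [|lra].
    replace ((mb - mu) * (mb / (mb - mu))) with mb in He by (field; lra). nra.
  - rewrite tau0_of_nonneg, Rmult_0_r, exp_0 in He by lra. nra.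
Qed.

Lemma prof_le0 t : mu < 0 -> t <= t0 -> prof k mb mu t <= 0.
Proof.
  intros Hmu Ht. unfold prof.
  assert (He : exp (- k * t0) <= exp (- k * t)) by (apply exp_le_mono; nra).
  rewrite exp_k_tau0 in He by exact Hmu.
  apply (Rmult_le_compat_l (mb - mu)) in He; [|lra].
  replace ((mb - mu) * (mb / (mb - mu))) with mb in He by (field; lra). nra.
Qed.

Lemma cum_earn_le_after a b : t0 <= a -> a <= b -> earn a <= earn b.
Proof.
  intros Ha Hab. apply (le_of_derivative_nonneg _ (prof k mb mu)); [exact Hab | |].
  - intros c _. apply cum_earn_deriv. lra.
  - intros c Hc. apply prof_ge0. lra.
Qed.

Lemma cum_earn_ge_before a b : 0 <= a -> a <= b -> b <= t0 -> earn b <= earn a.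
Proof.
  intros Ha Hab Hb. destruct (Rlt_dec mu 0) as [Hmu | Hmu].
  - enough (- earn a <= - earn b) by lra.
    apply (le_of_derivative_nonneg (fun t => - earn t) (fun t => - prof k mb mu t));
      [exact Hab | |].
    + intros c _. apply derivable_pt_lim_opp, cum_earn_deriv. lra.
    + intros c Hc. pose proof (prof_le0 c Hmu ltac:(lra)). lra.
  - rewrite tau0_of_nonneg in Hb by lra. replace b with a by lra. apply Rle_refl.
Qed.

Lemma cum_earn_tau0 : earn t0 = - xb k mb mu.
Proof.
  destruct (Rlt_dec mu 0) as [Hmu | Hmu].
  - rewrite xb_of_neg by exact Hmu. unfold cum_earn. rewrite exp_k_tau0 by exact Hmu.
    field. lra.
  - rewrite xb_of_nonneg, tau0_of_nonneg, cum_earn_0 by lra. ring.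
Qed.

Lemma xb_ge0 : 0 <= xb k mb mu.
Proof.
  pose proof (cum_earn_ge_before 0 t0 (Rle_refl 0) tau0_ge0 (Rle_refl t0)) as Hle.
  rewrite cum_earn_tau0, cum_earn_0 in Hle. lra.
Qed.

Lemma cum_earn_continuity_pt t : continuity_pt earn t.
Proof.
  apply derivable_continuous_pt. exists (prof k mb mu t). apply cum_earn_deriv. lra.
Qed.

End Earnings.

(* The discounted earnings \int_a^oo e^{-rt} mu_t dt after time a, in closed form. *)
Definition disc_tail (k mb r mu a : R) : R :=
  exp (- r * a) * (mb / r + (mu - mb) * exp (- k * a) / (r + k)).

Section DiscountedEarnings.

Variables k mb r mu : R.
Hypotheses (Hk : 0 < k) (Hmb : 0 < mb) (Hr : 0 < r).

Local Notation earn := (cum_earn k mb mu).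
Local Notation t0 := (tau0 k mb mu).
Local Notation tail := (disc_tail k mb r mu).

Lemma disc_tail_ge0 a : t0 <= a -> 0 <= tail a.
Proof.
  intros Ha. pose proof (prof_ge0 k mb mu Hk Hmb a Ha) as Hprof. unfold prof in Hprof.
  unfold disc_tail. apply Rmult_le_pos; [apply Rlt_le, exp_pos|].
  replace (mb / r + (mu - mb) * exp (- k * a) / (r + k))
    with ((mb * k + r * (mb + (mu - mb) * exp (- k * a))) / (r * (r + k))) by (field; lra).
  apply Rmult_le_pos; [nra | apply Rlt_le, Rinv_0_lt_compat; nra].
Qed.

(* Both bounds compare tail a - tail b = \int_a^b e^{-rt} mu_t dt with the
   earnings on [a, b] discounted at either end; mu_t >= 0 there. *)
Lemma disc_tail_diff_ge a b : t0 <= a -> a <= b ->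
  exp (- r * b) * (earn b - earn a) <= tail a - tail b.
Proof.
  intros Ha Hab.
  set (h := fun c => tail a - tail c - exp (- r * c) * (earn c - earn a)).
  enough (h a <= h b) by (unfold h in *; lra).
  apply (le_of_derivative_nonneg h (fun c => r * exp (- r * c) * (earn c - earn a)));
    [exact Hab | |].
  - intros c _. apply is_derive_Reals. unfold h, disc_tail, cum_earn.
    auto_derive; [repeat split; lra | field; lra].
  - intros c Hc. pose proof (cum_earn_le_after k mb mu Hk Hmb a c Ha ltac:(lra)).
    pose proof (exp_pos (- r * c)). apply Rmult_le_pos; [apply Rmult_le_pos|]; lra.
Qed.

Lemma disc_tail_diff_le a b : t0 <= a -> a <= b ->
  tail a - tail b <= exp (- r * a) * (earn b - earn a).
Proof.
  intros Ha Hab.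
  set (h := fun c => exp (- r * a) * (earn c - earn a) - tail a + tail c).
  enough (h a <= h b) by (unfold h in *; lra).
  apply (le_of_derivative_nonneg h
           (fun c => prof k mb mu c * (exp (- r * a) - exp (- r * c)))); [exact Hab | |].
  - intros c _. apply is_derive_Reals. unfold h, disc_tail, cum_earn, prof.
    auto_derive; [repeat split; lra | field; lra].
  - intros c Hc. apply Rmult_le_pos; [apply prof_ge0; lra|].
    enough (exp (- r * c) <= exp (- r * a)) by lra. apply exp_le_mono. nra.
Qed.

Lemma disc_tail_vanishes eps : 0 < eps -> exists D, 0 < D /\ tail (t0 + D) < eps.
Proof.
  intros He.
  set (C := mb / r + Rabs (mu - mb) / (r + k)).
  assert (HC : 0 <= C).
  { unfold C. pose proof (Rabs_pos (mu - mb)).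
    apply Rplus_le_le_0_compat; apply Rmult_le_pos; try lra;
      apply Rlt_le, Rinv_0_lt_compat; lra. }
  set (D := C / (r * eps) + 1). set (a := t0 + D).
  assert (HrD : eps * (r * D) = C + eps * r) by (unfold D; field; lra).
  pose proof (tau0_ge0 k mb mu Hk Hmb).
  assert (HD : 0 < D) by (unfold D; apply Rplus_le_lt_0_compat; [|lra];
    apply Rmult_le_pos; [lra | apply Rlt_le, Rinv_0_lt_compat; nra]).
  exists D. split; [exact HD|]. fold a.
  assert (Hbound : tail a <= exp (- r * a) * C).
  { unfold disc_tail, C. apply Rmult_le_compat_l; [apply Rlt_le, exp_pos|].
    apply Rplus_le_compat_l. unfold Rdiv. apply Rmult_le_compat_r;
      [apply Rlt_le, Rinv_0_lt_compat; lra|].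
    assert (exp (- k * a) <= 1) by (rewrite <- exp_0; apply exp_le_mono; unfold a; nra).
    pose proof (exp_pos (- k * a)). pose proof (Rle_abs (mu - mb)).
    pose proof (Rabs_pos (mu - mb)). destruct (Rle_dec 0 (mu - mb)); nra. }
  assert (Hgrowth : r * D < exp (r * a)).
  { pose proof (exp_ineq1_le (r * a)). assert (r * D <= r * a) by (unfold a; nra). lra. }
  assert (Hinv : exp (- r * a) * exp (r * a) = 1)
    by (rewrite <- exp_plus; replace (- r * a + r * a) with 0 by ring; apply exp_0).
  assert (HCe : C < eps * exp (r * a)) by nra.
  apply (Rmult_lt_compat_l (exp (- r * a))) in HCe; [|apply exp_pos].
  replace (exp (- r * a) * (eps * exp (r * a))) with eps in HCe
    by (rewrite <- Rmult_assoc, (Rmult_comm _ eps), Rmult_assoc, Hinv; ring).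
  lra.
Qed.

End DiscountedEarnings.

Fixpoint grid (a h : R) (n : nat) : list R :=
  match n with
  | O => nil
  | S n' => (a + h) :: grid (a + h) h n'
  end.

Lemma incr_from_grid a h n p : 0 < h -> p <= a -> incr_from p (grid a h n).
Proof.
  intros Hh. revert a p. induction n as [|n IH]; intros a p Hp; simpl; [exact I|].
  split; [lra | apply IH; lra].
Qed.

Lemma grid_gt a h n q : 0 < h -> In q (grid a h n) -> a < q.
Proof.
  intros Hh. revert a. induction n as [|n IH]; intros a Hq; simpl in Hq; [contradiction|].
  destruct Hq as [<- | Hq]; [lra|]. specialize (IH _ Hq). lra.
Qed.

Section StieltjesSums.

Variable r : R.
Hypothesis Hr : 0 <= r.

Lemma stieltjes_sum_ext (L L' : R -> R) p p' ts : L p = L' p' ->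
  (forall t, In t ts -> L t = L' t) -> stieltjes_sum r L p ts = stieltjes_sum r L' p' ts.
Proof.
  revert p p'. induction ts as [|t ts IH]; intros p p' Hp Hts; simpl; [reflexivity|].
  assert (Ht : L t = L' t) by (apply Hts; left; reflexivity).
  rewrite Hp, Ht, (IH t t Ht); [reflexivity|].
  intros u Hu. apply Hts. right. exact Hu.
Qed.

(* Summation by parts: a G whose decrements dominate B p (e^{-rp} - e^{-rt})
   bounds the discounted lower sums of every strategy below B. *)
Lemma stieltjes_sum_le (L B G : R -> R) :
  (forall p t, p < t -> B p * (exp (- r * p) - exp (- r * t)) <= G p - G t) ->
  (forall t, exp (- r * t) * B t <= G t) ->
  forall ts p, incr_from p ts -> (forall q, q = p \/ In q ts -> L q <= B q) ->
  exp (- r * p) * L p + stieltjes_sum r L p ts <= G p.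
Proof.
  intros Hstep Hlast. induction ts as [|t ts IH]; intros p Hinc HL; simpl.
  - pose proof (HL p (or_introl eq_refl)). pose proof (Hlast p).
    pose proof (exp_pos (- r * p)). nra.
  - destruct Hinc as [Hpt Hinc].
    assert (IHt : exp (- r * t) * L t + stieltjes_sum r L t ts <= G t).
    { apply IH; [exact Hinc|].
      intros q [-> | Hq]; apply HL; right; [left; reflexivity | right; exact Hq]. }
    pose proof (Hstep p t Hpt). pose proof (HL p (or_introl eq_refl)).
    assert (exp (- r * t) <= exp (- r * p)) by (apply exp_le_mono; nra).
    nra.
Qed.

Lemma stieltjes_sum_grid_ge (f T : R -> R) a h n : 0 <= a -> 0 < h ->
  (forall s t, a <= s <= t -> f s <= f t) ->
  (forall s t, a <= s <= t -> T s - T t <= exp (- r * s) * (f t - f s)) ->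
  T a - T (a + INR n * h) - (1 - exp (- r * h)) * (f (a + INR n * h) - f a)
    <= stieltjes_sum r f a (grid a h n).
Proof.
  intros Ha Hh. revert a Ha. induction n as [|n IH]; intros a Ha Hf HT;
    cbn [grid stieltjes_sum].
  - rewrite INR_0, Rmult_0_l, Rplus_0_r. lra.
  - rewrite S_INR. replace (a + (INR n + 1) * h) with (a + h + INR n * h) by ring.
    specialize (IH (a + h) ltac:(lra) ltac:(intros; apply Hf; lra)
                  ltac:(intros; apply HT; lra)).
    pose proof (pos_INR n).
    pose proof (HT a (a + h) ltac:(lra)) as Hstep.
    assert (Hinc : 0 <= f (a + h) - f a) by (pose proof (Hf a (a + h) ltac:(lra)); lra).
    pose proof (Hf (a + h) (a + h + INR n * h) ltac:(nra)).
    assert (Hsplit : exp (- r * (a + h)) = exp (- r * a) * exp (- r * h))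
      by (rewrite <- exp_plus; f_equal; ring).
    assert (exp (- r * a) <= 1) by (rewrite <- exp_0; apply exp_le_mono; nra).
    assert (exp (- r * h) <= 1) by (rewrite <- exp_0; apply exp_le_mono; nra).
    assert (0 <= (f (a + h) - f a) * ((1 - exp (- r * h)) * (1 - exp (- r * a))))
      by (apply Rmult_le_pos; [lra | apply Rmult_le_pos; lra]).
    rewrite Hsplit. nra.
Qed.

End StieltjesSums.

Section Strategies.

Variables k mb x mu : R.
Hypothesis Hk : 0 < k.

Local Notation earn := (cum_earn k mb mu).

Lemma not_after_ruin_le L p q :
  not_after_ruin k mb x mu L q -> 0 <= p <= q -> not_after_ruin k mb x mu L p.
Proof. intros [Hq Hres] Hp. split; [lra|]. intros s Hs. apply Hres. lra. Qed.

(* The jump condition at p, with X_{p-} = x + I(p) - L_{p-}. *)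
Lemma admissible_le_available L p : admissible k mb x mu L ->
  not_after_ruin k mb x mu L p -> L p <= x + earn p.
Proof.
  intros [Hmon [_ [_ [HL0x Hjump]]]] Hnar.
  destruct (proj1 Hnar) as [Hp | <-]; [|rewrite cum_earn_0; lra].
  destruct (nondecreasing_left_lim L p Hp Hmon) as [lL HlL].
  assert (HlX : left_lim (reserves k mb x mu L) p (x + earn p - lL)).
  { apply (left_lim_minus (fun s => x + earn s)); [|exact HlL].
    apply (left_lim_continuity_pt (fun s => x + earn s)).
    apply continuity_pt_plus; [apply continuity_pt_const; intros ? ?; reflexivity|].
    apply cum_earn_continuity_pt. exact Hk. }
  specialize (Hjump p Hp Hnar lL _ HlL HlX). lra.
Qed.

(* A continuous strategy never jumps, so the jump condition reduces to X_{t-} >= 0. *)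
Lemma admissible_of_continuous (L g : R -> R) :
  (forall t, 0 <= t -> L t = g t) -> (forall t, 0 <= t -> continuity_pt g t) ->
  (forall s t, 0 <= s <= t -> L s <= L t) -> 0 <= L 0 -> L 0 <= x ->
  admissible k mb x mu L.
Proof.
  intros HLg Hg Hmon HL0 HL0x. split; [exact Hmon|]. split; [|split; [|split]]; try assumption.
  - intros t Ht eps He. destruct (Hg t Ht eps He) as [d [Hd Hgd]].
    exists d. split; [exact Hd|]. intros s Hs. rewrite !HLg by lra.
    destruct (Req_dec s t) as [-> | Hst]; [rewrite Rminus_diag, Rabs_R0; exact He|].
    apply (Hgd s). split; [split; [exact I | auto] |].
    simpl. unfold R_dist. rewrite Rabs_right; lra.
  - intros t Ht [_ Hres] lL lX HlL HlX.
    assert (Hgt : left_lim g t (g t)) by (apply left_lim_continuity_pt, Hg; lra).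
    assert (Hagree : forall s, t - t < s < t -> L s = g s) by (intros s Hs; apply HLg; lra).
    assert (lL <= g t)
      by (apply (left_lim_le L g t lL (g t) t Ht); [intros; rewrite Hagree; lra | |]; assumption).
    assert (g t <= lL)
      by (apply (left_lim_le g L t (g t) lL t Ht); [intros; rewrite Hagree; lra | |]; assumption).
    assert (0 <= lX).
    { apply (left_lim_le (fun _ => 0) (reserves k mb x mu L) t 0 lX t Ht);
        [intros s Hs; apply Hres; lra | | exact HlX].
      intros eps He. exists 1. split; [lra|]. intros. rewrite Rminus_0_r, Rabs_R0. exact He. }
    rewrite HLg by lra. lra.
Qed.

Lemma constant_admissible : 0 <= x -> admissible k mb x mu (fun _ => x).
Proof.
  intros Hx. apply (admissible_of_continuous _ (fun _ => x)); try (intros; lra).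
  intros t _. apply continuity_pt_const. intros ? ?. reflexivity.
Qed.

Lemma constant_lower_sum r : dividend_lower_sum k mb r x mu (fun _ => x) x.
Proof. exists nil. split; [exact I | split; [constructor | simpl; ring]]. Qed.

End Strategies.

(* L*: pay out x - xb at time 0, wait until tau0, then pay all earnings as they arrive. *)
Definition optimal_payout (k mb x mu t : R) : R :=
  x + cum_earn k mb mu (Rmax t (tau0 k mb mu)).

(* The discounted dividends of L* from time a on, plus e^{-ra} L*(a). *)
Definition payout_value (k mb r x mu a : R) : R :=
  exp (- r * a) * optimal_payout k mb x mu a + disc_tail k mb r mu (Rmax a (tau0 k mb mu)).

(* What waiting for the earnings adds to immediate liquidation, once x >= xb. *)
Definition continuation_gain (k mb r mu : R) : R :=
  disc_tail k mb r mu (tau0 k mb mu) - xb k mb mu.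

Section Value.

Variables k mb r x mu : R.
Hypotheses (Hk : 0 < k) (Hmb : 0 < mb) (Hr : 0 < r) (Hx : 0 <= x).

Local Notation earn := (cum_earn k mb mu).
Local Notation t0 := (tau0 k mb mu).
Local Notation tail := (disc_tail k mb r mu).
Local Notation Lstar := (optimal_payout k mb x mu).
Local Notation G := (payout_value k mb r x mu).

Lemma payout_value_0 : G 0 = x + continuation_gain k mb r mu.
Proof.
  unfold payout_value, optimal_payout, continuation_gain.
  rewrite Rmax_right by (apply tau0_ge0; assumption).
  rewrite Rmult_0_r, exp_0, cum_earn_tau0 by assumption. ring.
Qed.

Lemma payout_value_step p t : p < t ->
  Lstar p * (exp (- r * p) - exp (- r * t)) <= G p - G t.
Proof.
  intros Hpt. unfold payout_value, optimal_payout.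
  destruct (Rle_dec t t0) as [Ht | Ht].
  - rewrite (Rmax_right t), (Rmax_right p) by lra. lra.
  - rewrite (Rmax_left t) by lra.
    assert (Hp : Rmax p t0 <= t) by (apply Rmax_lub; lra).
    pose proof (disc_tail_diff_ge k mb r mu Hk Hmb Hr (Rmax p t0) t (Rmax_r _ _) Hp).
    nra.
Qed.

Lemma payout_value_ge t : exp (- r * t) * Lstar t <= G t.
Proof.
  unfold payout_value. pose proof (disc_tail_ge0 k mb r mu Hk Hmb Hr _ (Rmax_r t t0)). lra.
Qed.

Lemma optimal_payout_le L p : admissible k mb x mu L -> 0 <= p ->
  not_after_ruin k mb x mu L (Rmax p t0) -> L p <= Lstar p.
Proof.
  intros Hadm Hp Hnar. pose proof Hadm as [Hmon _].
  pose proof (Hmon p (Rmax p t0) (conj Hp (Rmax_l p t0))).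
  pose proof (admissible_le_available k mb x mu Hk L _ Hadm Hnar). unfold optimal_payout. lra.
Qed.

(* Either the partition stops before tau0, when no strategy has more than x
   to pay, or L survives until tau0 and is dominated by L* from then on. *)
Lemma dividend_lower_sum_le L s : admissible k mb x mu L ->
  dividend_lower_sum k mb r x mu L s -> s <= x \/ (xb k mb mu <= x /\ s <= G 0).
Proof.
  intros Hadm [ts [Hinc [Hruin ->]]]. pose proof Hadm as [Hmon [_ [HL0 _]]].
  rewrite Forall_forall in Hruin.
  assert (Hnar : forall p, p = 0 \/ In p ts -> not_after_ruin k mb x mu L p)
    by (intros p [-> | Hp]; [split; [lra | intros; lra] | auto]).
  pose proof (tau0_ge0 k mb mu Hk Hmb) as Ht0.
  replace (L 0 + stieltjes_sum r L 0 ts) with (exp (- r * 0) * L 0 + stieltjes_sum r L 0 ts)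
    by (rewrite Rmult_0_r, exp_0; ring).
  destruct (classic (exists q, In q ts /\ t0 < q)) as [[q [Hq Htq]] | Hbefore].
  - assert (Hnar0 : not_after_ruin k mb x mu L t0)
      by (apply (not_after_ruin_le _ _ _ _ _ _ q); [auto | lra]).
    right. split.
    + pose proof (optimal_payout_le L 0 Hadm (Rle_refl 0) ltac:(rewrite Rmax_right; auto))
        as HL0star.
      unfold optimal_payout in HL0star. rewrite Rmax_right, cum_earn_tau0 in HL0star by auto.
      lra.
    + apply (stieltjes_sum_le r (Rlt_le _ _ Hr) L Lstar G payout_value_step payout_value_ge
               ts 0 Hinc).
      intros p Hp. pose proof (proj1 (Hnar p Hp)).
      apply optimal_payout_le; [exact Hadm | lra|].
      unfold Rmax. destruct (Rle_dec p t0); auto.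
  - left. apply Rle_trans with (x * exp (- r * 0)); [|rewrite Rmult_0_r, exp_0; lra].
    apply (stieltjes_sum_le r (Rlt_le _ _ Hr) L (fun _ => x) (fun t => x * exp (- r * t)));
      [intros; lra | intros; lra | exact Hinc |].
    intros p Hp. pose proof (proj1 (Hnar p Hp)).
    assert (p <= t0).
    { destruct Hp as [-> | Hp]; [lra|]. apply Rnot_lt_le. intros Hlt. apply Hbefore. eauto. }
    pose proof (admissible_le_available k mb x mu Hk L p Hadm (Hnar p Hp)).
    pose proof (cum_earn_ge_before k mb mu Hk Hmb 0 p ltac:(lra) ltac:(lra) ltac:(lra)).
    rewrite cum_earn_0 in *. lra.
Qed.

Section OptimalPayout.

Variable L : R -> R.
Hypothesis HL : forall t, 0 <= t -> L t = Lstar t.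

Lemma optimal_payout_continuity_pt t : continuity_pt Lstar t.
Proof.
  unfold optimal_payout.
  apply continuity_pt_plus; [apply continuity_pt_const; intros ? ?; reflexivity|].
  apply (continuity_pt_comp (fun s => Rmax s t0) earn);
    [apply continuity_pt_Rmax_l | apply cum_earn_continuity_pt; exact Hk].
Qed.

Lemma optimal_payout_admissible : xb k mb mu <= x -> admissible k mb x mu L.
Proof.
  intros Hxb. pose proof (tau0_ge0 k mb mu Hk Hmb).
  assert (HL0 : L 0 = x - xb k mb mu).
  { rewrite HL by lra. unfold optimal_payout. rewrite Rmax_right, cum_earn_tau0 by auto. ring. }
  pose proof (xb_ge0 k mb mu Hk Hmb).
  apply (admissible_of_continuous k mb x mu L Lstar HL);
    [intros; apply optimal_payout_continuity_pt | | lra | lra].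
  intros s t Hst. rewrite !HL by lra. unfold optimal_payout.
  apply Rplus_le_compat_l, cum_earn_le_after; [exact Hk | exact Hmb | apply Rmax_r |].
  apply Rle_max_compat_r. lra.
Qed.

(* Reserves under L* are I(t) - I(tau0) >= 0 before tau0 and 0 afterwards. *)
Lemma optimal_payout_not_after_ruin t : 0 <= t -> not_after_ruin k mb x mu L t.
Proof.
  intros Ht. split; [exact Ht|]. intros s Hs.
  unfold reserves. rewrite HL by lra. unfold optimal_payout.
  destruct (Rle_dec t0 s) as [Hs0 | Hs0].
  - rewrite Rmax_left by lra. lra.
  - rewrite Rmax_right by lra.
    pose proof (cum_earn_ge_before k mb mu Hk Hmb s t0 ltac:(lra) ltac:(lra) (Rle_refl _)). lra.
Qed.

(* On the grid of step h = D / n from tau0, the lower sum misses only the tail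
   after tau0 + D and at most (1 - e^{-rh}) (I(tau0 + D) - I(tau0)). *)
Lemma optimal_payout_lower_sums eps : 0 < eps ->
  exists s, dividend_lower_sum k mb r x mu L s /\ G 0 - eps < s.
Proof.
  intros He. pose proof (tau0_ge0 k mb mu Hk Hmb) as Ht0.
  destruct (disc_tail_vanishes k mb r mu Hk Hmb Hr (eps / 2)) as [D [HD Hsmall]]; [lra|].
  set (K := earn (t0 + D) - earn t0).
  assert (HK : 0 <= K).
  { pose proof (cum_earn_le_after k mb mu Hk Hmb t0 (t0 + D) (Rle_refl _) ltac:(lra)).
    unfold K. lra. }
  destruct (INR_unbounded (2 * r * D * K / eps)) as [n Hn].
  assert (Hn0 : 0 < INR n).
  { enough (0 <= 2 * r * D * K / eps) by lra.
    apply Rmult_le_pos; [repeat apply Rmult_le_pos; lra | apply Rlt_le, Rinv_0_lt_compat; lra]. }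
  set (h := D / INR n).
  assert (Hh : 0 < h) by (apply Rdiv_lt_0_compat; lra).
  assert (HnhD : INR n * h = D) by (unfold h; field; lra).
  set (f := fun t => x + earn t).
  assert (Hgrid : forall q, In q (grid t0 h n) -> L q = f q).
  { intros q Hq. pose proof (grid_gt t0 h n q Hh Hq).
    rewrite HL by lra. unfold optimal_payout, f. rewrite Rmax_left by lra. reflexivity. }
  exists (L 0 + stieltjes_sum r L 0 (grid t0 h n)). split.
  - exists (grid t0 h n). split; [apply incr_from_grid; lra|]. split; [|reflexivity].
    apply Forall_forall. intros q Hq. apply optimal_payout_not_after_ruin.
    pose proof (grid_gt t0 h n q Hh Hq). lra.
  - assert (HL0 : L 0 = f t0).
    { rewrite HL by lra. unfold optimal_payout, f. rewrite Rmax_right by lra. reflexivity. }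
    rewrite (stieltjes_sum_ext r L f 0 t0 _ HL0 Hgrid), HL0.
    assert (Hf : forall s t, t0 <= s <= t -> f s <= f t)
      by (intros s t Hst; unfold f; apply Rplus_le_compat_l, cum_earn_le_after; lra).
    assert (Htail : forall s t, t0 <= s <= t -> tail s - tail t <= exp (- r * s) * (f t - f s)).
    { intros s t Hst. unfold f. replace (x + earn t - (x + earn s)) with (earn t - earn s) by ring.
      apply disc_tail_diff_le; lra. }
    pose proof (stieltjes_sum_grid_ge r (Rlt_le _ _ Hr) f tail t0 h n Ht0 Hh Hf Htail) as Hsum.
    rewrite HnhD in Hsum.
    assert (HG0 : G 0 = f t0 + tail t0).
    { unfold payout_value, optimal_payout, f. rewrite Rmax_right by lra.
      rewrite Rmult_0_r, exp_0. ring. }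
    assert (Hmesh : (1 - exp (- r * h)) * K < eps / 2).
    { assert (Hexp : 1 - exp (- r * h) <= r * h) by (pose proof (exp_ineq1_le (- r * h)); lra).
      apply Rle_lt_trans with (r * h * K); [apply Rmult_le_compat_r; lra|].
      replace (r * h * K) with (r * D * K / INR n) by (unfold h; field; lra).
      apply (Rmult_lt_reg_r (INR n)); [exact Hn0|].
      replace (r * D * K / INR n * INR n) with (r * D * K) by (field; lra).
      apply (Rmult_lt_reg_l (2 / eps)); [apply Rdiv_lt_0_compat; lra|].
      replace (2 / eps * (eps / 2 * INR n)) with (INR n) by (field; lra).
      replace (2 / eps * (r * D * K)) with (2 * r * D * K / eps) by (field; lra). lra. }
    replace (f (t0 + D) - f t0) with K in Hsum by (unfold K, f; ring).
    rewrite HG0. lra.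
Qed.

End OptimalPayout.

Lemma value_below_barrier : x < xb k mb mu -> value_is k mb r x mu x.
Proof.
  intros Hxb. apply is_lub_intro.
  - intros s [L [Hadm Hs]].
    destruct (dividend_lower_sum_le L s Hadm Hs) as [Hsx | [Hxb' _]]; lra.
  - intros eps He. exists x. split; [|lra].
    exists (fun _ => x). split; [apply constant_admissible, Hx | apply constant_lower_sum].
Qed.

Lemma value_above_barrier : xb k mb mu <= x ->
  value_is k mb r x mu (x + Rmax 0 (continuation_gain k mb r mu)).
Proof.
  intros Hxb.
  pose proof (Rmax_l 0 (continuation_gain k mb r mu)).
  pose proof (Rmax_r 0 (continuation_gain k mb r mu)).
  apply is_lub_intro.
  - intros s [L [Hadm Hs]]. destruct (dividend_lower_sum_le L s Hadm Hs) as [Hsx | [_ HsG]];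
      [|rewrite payout_value_0 in HsG]; lra.
  - intros eps He. destruct (Rle_dec (continuation_gain k mb r mu) 0) as [Hg | Hg].
    + exists x. rewrite Rmax_left by exact Hg. split; [|lra].
      exists (fun _ => x). split; [apply constant_admissible, Hx | apply constant_lower_sum].
    + destruct (optimal_payout_lower_sums Lstar (fun _ _ => eq_refl) eps He) as [s [Hs HsG]].
      exists s. rewrite Rmax_right, <- payout_value_0 by lra. split; [|exact HsG].
      exists Lstar.
      split; [apply (optimal_payout_admissible Lstar (fun _ _ => eq_refl) Hxb) | exact Hs].
Qed.

Lemma optimal_payout_payoff L : (forall t, 0 <= t -> L t = Lstar t) ->
  xb k mb mu <= x -> 0 <= continuation_gain k mb r mu ->
  admissible k mb x mu L /\ payoff_is k mb r x mu L (x + continuation_gain k mb r mu).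
Proof.
  intros HL Hxb Hg. pose proof (optimal_payout_admissible L HL Hxb) as Hadm.
  split; [exact Hadm|]. rewrite <- payout_value_0. apply is_lub_intro.
  - intros s Hs. rewrite payout_value_0.
    destruct (dividend_lower_sum_le L s Hadm Hs) as [Hsx | [_ HsG]];
      [|rewrite payout_value_0 in HsG]; lra.
  - exact (optimal_payout_lower_sums L HL).
Qed.

Lemma value_of_gain_nonpos : continuation_gain k mb r mu <= 0 -> value_is k mb r x mu x.
Proof.
  intros Hg. destruct (Rlt_dec x (xb k mb mu)) as [Hxb | Hxb]; [exact (value_below_barrier Hxb)|].
  rewrite <- (Rplus_0_r x) at 2. rewrite <- (Rmax_left 0 _ Hg).
  apply value_above_barrier. lra.
Qed.

Lemma value_of_gain_nonneg : xb k mb mu <= x -> 0 <= continuation_gain k mb r mu ->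
  value_is k mb r x mu (x + continuation_gain k mb r mu).
Proof.
  intros Hxb Hg. rewrite <- (Rmax_right 0 _ Hg). exact (value_above_barrier Hxb).
Qed.

End Value.

(* For mu = mb (1 - e^{kt}) one has tau0 = t, and this is then the continuation gain. *)
Definition gain_at_delay (k mb r t : R) : R :=
  exp (- r * t) * continuation_gain k mb r 0 + mb * t + mb * (1 - exp (k * t)) / k.

Section Threshold.

Variables k mb r : R.
Hypotheses (Hk : 0 < k) (Hmb : 0 < mb) (Hr : 0 < r).

Local Notation gain := (continuation_gain k mb r).
Local Notation psi := (gain_at_delay k mb r).

Lemma continuation_gain_of_nonneg mu : 0 <= mu -> gain mu = mb / r + (mu - mb) / (r + k).
Proof.
  intros Hmu. unfold continuation_gain, disc_tail.
  rewrite xb_of_nonneg, tau0_of_nonneg, !Rmult_0_r, exp_0 by exact Hmu. field. lra.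
Qed.

Lemma continuation_gain_ge0 mu : 0 <= mu -> 0 <= gain mu.
Proof.
  intros Hmu. rewrite continuation_gain_of_nonneg by exact Hmu.
  replace (mb / r + (mu - mb) / (r + k)) with ((mb * k + r * mu) / (r * (r + k))) by (field; lra).
  apply Rmult_le_pos; [nra | apply Rlt_le, Rinv_0_lt_compat; nra].
Qed.

Lemma continuation_gain_0_pos : 0 < gain 0.
Proof.
  rewrite continuation_gain_of_nonneg by lra.
  replace (mb / r + (0 - mb) / (r + k)) with (mb * k / (r * (r + k))) by (field; lra).
  apply Rdiv_lt_0_compat; nra.
Qed.

(* After tau0 the profitability path is that of mu = 0 started at tau0. *)
Lemma continuation_gain_of_neg mu : mu < 0 ->
  gain mu = exp (- r * tau0 k mb mu) * gain 0 - xb k mb mu.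
Proof.
  intros Hmu. rewrite (continuation_gain_of_nonneg 0) by lra.
  unfold continuation_gain, disc_tail. rewrite exp_k_tau0 by assumption.
  f_equal. f_equal. field. lra.
Qed.

Lemma exp_k_tau0_inv mu : mu < 0 -> exp (k * tau0 k mb mu) = (mb - mu) / mb.
Proof.
  intros Hmu. replace (k * tau0 k mb mu) with (- (- k * tau0 k mb mu)) by ring.
  rewrite exp_Ropp, exp_k_tau0 by assumption. field. lra.
Qed.

Lemma continuation_gain_at_delay mu : mu < 0 -> gain mu = psi (tau0 k mb mu).
Proof.
  intros Hmu. rewrite continuation_gain_of_neg, xb_of_neg by assumption.
  unfold gain_at_delay. rewrite exp_k_tau0_inv by assumption. field. lra.
Qed.

Lemma tau0_at_delay t : 0 < t -> tau0 k mb (mb * (1 - exp (k * t))) = t.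
Proof.
  intros Ht. assert (1 < exp (k * t)) by (rewrite <- exp_0; apply exp_increasing; nra).
  rewrite tau0_of_neg by nra.
  replace ((mb - mb * (1 - exp (k * t))) / mb) with (exp (k * t)) by (field; lra).
  rewrite ln_exp. field. lra.
Qed.

Lemma tau0_antitone a b : a <= b -> b < 0 -> tau0 k mb b <= tau0 k mb a.
Proof.
  intros Hab Hb. rewrite !tau0_of_neg by lra.
  apply Rmult_le_compat_l; [apply Rlt_le, Rinv_0_lt_compat; lra|].
  destruct (Req_dec a b) as [-> | Hne]; [apply Rle_refl|].
  apply Rlt_le, ln_increasing; [apply Rdiv_lt_0_compat; lra|].
  apply Rmult_lt_compat_r; [apply Rinv_0_lt_compat|]; lra.
Qed.

Lemma gain_at_delay_0 : psi 0 = gain 0.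
Proof. unfold gain_at_delay. rewrite !Rmult_0_r, exp_0. field. lra. Qed.

Lemma gain_at_delay_derive t :
  derivable_pt_lim psi t (- r * exp (- r * t) * gain 0 + mb * (1 - exp (k * t))).
Proof.
  set (g0 := gain 0). apply is_derive_Reals. unfold gain_at_delay. fold g0.
  auto_derive; [lra | field; lra].
Qed.

Lemma gain_at_delay_antitone a b : 0 <= a -> a <= b -> psi b <= psi a.
Proof.
  intros Ha Hab. enough (- psi a <= - psi b) by lra.
  apply (le_of_derivative_nonneg (fun t => - psi t)
           (fun t => - (- r * exp (- r * t) * gain 0 + mb * (1 - exp (k * t)))));
    [exact Hab | intros; apply derivable_pt_lim_opp, gain_at_delay_derive |].
  intros c Hc. pose proof continuation_gain_0_pos. pose proof (exp_pos (- r * c)).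
  assert (1 <= exp (k * c)) by (rewrite <- exp_0; apply exp_le_mono; nra).
  assert (0 <= r * exp (- r * c) * gain 0) by (repeat apply Rmult_le_pos; lra). nra.
Qed.

Lemma gain_at_delay_continuity : continuity psi.
Proof.
  intros t. apply derivable_continuous_pt. eexists. apply gain_at_delay_derive.
Qed.

(* e^{kt} >= 1 + kt + (kt)^2/2 makes psi t <= gain 0 - mb k t^2 / 2. *)
Lemma gain_at_delay_eventually_neg : exists t, 0 < t /\ psi t < 0.
Proof.
  pose proof continuation_gain_0_pos as Hg0.
  set (t := 1 + 2 * gain 0 / (mb * k)).
  assert (Ht : 2 * gain 0 / (mb * k) * (mb * k) = 2 * gain 0) by (field; nra).
  assert (0 < 2 * gain 0 / (mb * k)) by (apply Rdiv_lt_0_compat; nra).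
  exists t. split; [unfold t; lra|].
  pose proof (exp_ge_taylor (k * t) 2 ltac:(unfold t; nra)) as Htaylor.
  simpl in Htaylor.
  assert (Hsum : mb * (1 - exp (k * t)) / k <= - mb * t - mb * k * t * t / 2).
  { apply (Rmult_le_reg_r k); [exact Hk|].
    replace (mb * (1 - exp (k * t)) / k * k) with (mb * (1 - exp (k * t))) by (field; lra).
    nra. }
  assert (exp (- r * t) <= 1) by (rewrite <- exp_0; apply exp_le_mono; unfold t; nra).
  assert (mb * k * t * t / 2 > gain 0) by (unfold t; nra).
  unfold gain_at_delay. nra.
Qed.

Lemma continuation_gain_threshold : exists mustar, mustar < 0 /\
  (forall mu, mu <= mustar -> gain mu <= 0) /\ (forall mu, mustar <= mu -> 0 <= gain mu).
Proof.
  destruct gain_at_delay_eventually_neg as [t1 [Ht1 Hpsi1]].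
  pose proof continuation_gain_0_pos as Hg0.
  destruct (IVT (fun t => - psi t) 0 t1) as [ts [[Hts0 Hts1] Hzero]];
    [apply continuity_opp, gain_at_delay_continuity | exact Ht1
    | rewrite gain_at_delay_0; lra | lra |].
  assert (Hts : 0 < ts).
  { destruct Hts0 as [| <-]; [assumption|]. rewrite gain_at_delay_0 in Hzero. lra. }
  assert (1 < exp (k * ts)) by (rewrite <- exp_0; apply exp_increasing; nra).
  exists (mb * (1 - exp (k * ts))). split; [nra | split].
  - intros mu Hmu. rewrite continuation_gain_at_delay by nra.
    pose proof (tau0_antitone mu _ Hmu ltac:(nra)) as Hle.
    rewrite tau0_at_delay in Hle by exact Hts.
    pose proof (gain_at_delay_antitone ts (tau0 k mb mu) (Rlt_le _ _ Hts) Hle). lra.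
  - intros mu Hmu. destruct (Rlt_dec mu 0) as [Hneg | Hpos]; [|apply continuation_gain_ge0; lra].
    rewrite continuation_gain_at_delay by exact Hneg.
    pose proof (tau0_antitone _ mu Hmu Hneg) as Hle.
    rewrite tau0_at_delay in Hle by exact Hts.
    pose proof (gain_at_delay_antitone _ ts (tau0_ge0 k mb mu Hk Hmb) Hle). lra.
Qed.

End Threshold.

Lemma optimal_payout_min_form k mb x mu t : 0 < k -> 0 < mb ->
  x - xb k mb mu + cum_earn k mb mu t - cum_earn k mb mu (Rmin (tau0 k mb mu) t)
  = optimal_payout k mb x mu t.
Proof.
  intros Hk Hmb. unfold optimal_payout.
  destruct (Rle_dec t (tau0 k mb mu)) as [Ht | Ht].
  - rewrite Rmin_right, Rmax_right by lra. rewrite cum_earn_tau0 by assumption. ring.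
  - rewrite Rmin_left, Rmax_left by lra. rewrite cum_earn_tau0 by assumption. ring.
Qed.

Lemma value_of_nonneg_profitability k mb r x mu : 0 < k -> 0 < mb -> 0 < r ->
  0 <= mu -> 0 <= x ->
  value_is k mb r x mu (x + continuation_gain k mb r mu) /\
  admissible k mb x mu (fun t => x + cum_earn k mb mu t) /\
  payoff_is k mb r x mu (fun t => x + cum_earn k mb mu t) (x + continuation_gain k mb r mu).
Proof.
  intros Hk Hmb Hr Hmu Hx.
  assert (Hxb : xb k mb mu <= x) by (rewrite xb_of_nonneg; assumption).
  pose proof (continuation_gain_ge0 k mb r Hk Hmb Hr mu Hmu) as Hg.
  split; [apply value_of_gain_nonneg; assumption|].
  apply optimal_payout_payoff; try assumption.
  intros t Ht. unfold optimal_payout. rewrite tau0_of_nonneg, Rmax_left by assumption.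
  reflexivity.
Qed.

Theorem theorem5p1 (k mubar r : R) (hk : 0 < k) (hmubar : 0 < mubar) (hr : 0 < r) :
  (* (a) *)
  (forall mu x, 0 <= mu -> 0 <= x ->
     value_is k mubar r x mu (x + mubar / r + (mu - mubar) / (r + k)) /\
     admissible k mubar x mu (fun t => x + cum_earn k mubar mu t) /\
     payoff_is k mubar r x mu (fun t => x + cum_earn k mubar mu t)
       (x + mubar / r + (mu - mubar) / (r + k))) /\
  (* (b) *)
  (forall mu x v00, mu < 0 -> 0 <= x -> value_is k mubar r 0 0 v00 ->
     (x < xb k mubar mu -> value_is k mubar r x mu x) /\
     (xb k mubar mu <= x ->
        value_is k mubar r x mu
          (x + Rmax 0 (exp (- r * tau0 k mubar mu) * v00 - xb k mubar mu)))) /\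
  (* (c) *)
  (exists mustar, mustar < 0 /\
     (forall mu x, mu <= mustar -> 0 <= x -> value_is k mubar r x mu x) /\
     (forall mu x, mustar <= mu -> 0 <= x -> xb k mubar mu <= x ->
        let Lopt := fun t => x - xb k mubar mu + cum_earn k mubar mu t
                             - cum_earn k mubar mu (Rmin (tau0 k mubar mu) t) in
        admissible k mubar x mu Lopt /\
        exists v, value_is k mubar r x mu v /\ payoff_is k mubar r x mu Lopt v)).
Proof.
  destruct (continuation_gain_threshold k mubar r hk hmubar hr) as [mustar [Hneg [Hlow Hhigh]]].
  split; [|split].
  - intros mu x Hmu Hx.
    replace (x + mubar / r + (mu - mubar) / (r + k)) with (x + continuation_gain k mubar r mu)
      by (rewrite continuation_gain_of_nonneg by auto; ring).
    apply value_of_nonneg_profitability; auto.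
  - intros mu x v00 Hmu Hx Hv. split; [apply value_below_barrier; auto | intros Hxb].
    assert (Hv00 : v00 = continuation_gain k mubar r 0).
    { rewrite <- (Rplus_0_l (continuation_gain k mubar r 0)).
      apply (is_lub_u _ _ _ Hv), value_of_nonneg_profitability; auto; lra. }
    rewrite Hv00, <- continuation_gain_of_neg by auto. apply value_above_barrier; auto.
  - exists mustar. split; [exact Hneg | split].
    + intros mu x Hmu Hx. apply value_of_gain_nonpos; auto.
    + intros mu x Hmu Hx Hxb Lopt.
      destruct (optimal_payout_payoff k mubar r x mu hk hmubar hr Lopt) as [Hadm Hpay]; auto.
      { intros t _. apply optimal_payout_min_form; auto. }
      split; [exact Hadm|]. exists (x + continuation_gain k mubar r mu).
      split; [apply value_of_gain_nonneg|]; auto.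
Qed.
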